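(* Let $X$ be a compact Hausdorff space and let $\mathcal{F}=\{X;f_\lambda\mid\lambda\in\Lambda\}$ be a minimal IFS. Let $n$ be a positive integer. Then there exist an $\mathcal{F}^{n}$-minimal set $M$ and an integer $1\le t\leq n$ such that: (1) $X$ is the disjoint union of $M,\mathcal{F}(M),\dots,\mathcal{F}^{t-1}(M)$; (2) each of the sets $M,\mathcal{F}(M),\dots,\mathcal{F}^{t-1}(M)$ is clopen; (3) the family $\{M,\mathcal{F}(M),\dots,\mathcal{F}^{t-1}(M)\}$ is exactly the collection of all subsets of $X$ that are $\mathcal{F}^{t}$-minimal, and also exactly the collection of all subsets of $X$ that are $\mathcal{F}^{n}$-minimal.
   Context: $\Lambda$ is a finite nonempty set and $\mathcal{F}=\{X;f_\lambda\mid\lambda\in\Lambda\}$ is an iterated function system (IFS) of continuous maps $f_\lambda:X\to X$. $\Lambda^{\mathbb{Z}_+}$ denotes the set of sequences $\sigma=(\lambda_1,\lambda_2,\dots)$ in $\Lambda$, and $\mathcal{F}_{\sigma_n}=f_{\lambda_n}\circ\cdots\circ f_{\lambda_1}$. For $A\subseteq X$, $\mathcal{F}(A)=\bigcup_{\lambda\in\Lambda}f_\lambda(A)$, $\mathcal{F}^k(A)=\bigcup_{\lambda_1,\dots,\lambda_k\in\Lambda}f_{\lambda_k}\circ\cdots\circ f_{\lambda_1}(A)$, $\mathcal{F}^0(A)=A$. A nonempty closed set $M\subseteq X$ is $\mathcal{F}^n$-minimal if $\mathcal{F}_{\sigma_n}(M)=M$ for all $\sigma\in\Lambda^{\mathbb{Z}_+}$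 and $\mathcal{F}_{\sigma_n}(A)\neq A$ for every nonempty proper subset $A\subsetneq M$ and every $\sigma$. The IFS $\mathcal{F}$ is minimal if the only $\mathcal{F}^1$-minimal set is $X$ itself; equivalently, for every $x\in X$ the set $\{f_{\lambda_k}\circ\cdots\circ f_{\lambda_1}(x): k>0,\ \lambda_1,\dots,\lambda_k\in\Lambda\}$ is dense in $X$. *)

From Stdlib Require List.
From mathcomp Require Import all_boot.
Set Implicit Arguments. Unset Strict Implicit. Unset Printing Implicit Defensive.

Definition set_eq {X : Type} (A B : X -> Prop) : Prop := forall x, A x <-> B x.
Definition subset {X : Type} (A B : X -> Prop) : Prop := forall x, A x -> B x.
Definition nonempty {X : Type} (A : X -> Prop) : Prop := exists x, A x.
Definition setT {X : Type} : X -> Prop := fun _ => True.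

Record topology (X : Type) := Topology {
  is_open : (X -> Prop) -> Prop;
  open_setT : is_open (fun _ => True);
  open_inter : forall U V, is_open U -> is_open V -> is_open (fun x => U x /\ V x);
  open_union : forall (Fam : (X -> Prop) -> Prop),
      (forall U, Fam U -> is_open U) ->
      is_open (fun x => exists U, Fam U /\ U x)
}.

Section Topo.
Variables (X : Type) (T : topology X).
Definition is_closed (A : X -> Prop) : Prop := is_open T (fun x => ~ A x).
Definition is_clopen (A : X -> Prop) : Prop := is_open T A /\ is_closed A.
Definition compact_space : Prop :=
  forall Fam : (X -> Prop) -> Prop,
    (forall U, Fam U -> is_open T U) ->
    (forall x, exists U, Fam U /\ U x) ->
    exists l : list (X -> Prop),
      (forall U, List.In U l -> Fam U) /\ (forall x, exists U, List.In U l /\ U x).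
Definition hausdorff : Prop :=
  forall x y : X, x <> y -> exists U V, is_open T U /\ is_open T V /\
    U x /\ V y /\ (forall z, ~ (U z /\ V z)).
Definition continuous (g : X -> X) : Prop :=
  forall U, is_open T U -> is_open T (fun x => U (g x)).
End Topo.

Definition Fimg {X : Type} {Lam : Type} (f : Lam -> X -> X) (A : X -> Prop) : X -> Prop :=
  fun y => exists l x, A x /\ f l x = y.
Fixpoint Fpow {X : Type} {Lam : Type} (f : Lam -> X -> X) (k : nat) (A : X -> Prop)
  : X -> Prop :=
  match k with 0 => A | k'.+1 => Fimg f (Fpow f k' A) end.

Definition Fminimal {X : Type} (T : topology X) {Lam : Type} (f : Lam -> X -> X)
  (n : nat) (M : X -> Prop) : Prop :=
  nonempty M /\ is_closed T M /\ set_eq (Fpow f n M) M /\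
  (forall A, nonempty A -> is_closed T A -> subset A M -> ~ set_eq A M ->
     ~ set_eq (Fpow f n A) A).

Definition minimal_IFS {X : Type} (T : topology X) {Lam : Type} (f : Lam -> X -> X) : Prop :=
  forall A, Fminimal T f 1 A <-> set_eq A setT.

From mathcomp Require Import all_boot zify.
From mathcomp Require Import boolp.
From mathcomp Require classical_sets.

Set Implicit Arguments. Unset Strict Implicit. Unset Printing Implicit Defensive.

(* Minimality is handled in the form "minimal among nonempty closed C with
   F^k(C) <= C"; this agrees with F^k-minimality because, by Zorn's lemma and
   compactness, every such C contains a minimal one, and a minimal one is
   invariant.  Take M minimal for F^n and t the least period of M under F.
   Each F^i(M) is again minimal, two minimal sets that meet coincide, so
   M, ..., F^(t-1)(M) are pairwise disjoint; their union is closed and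
   F-invariant, hence all of X by minimality of the IFS.  A finite partition
   into closed sets is a partition into clopen sets, and every F^t- or
   F^n-minimal set meets, hence equals, one of the F^i(M). *)

Lemma set_eq_ext (X : Type) (A B : X -> Prop) : set_eq A B -> A = B.
Proof. by move=> AB; apply: funext => x; apply: propext. Qed.

Section Topology.
Variables (X : Type) (T : topology X).

Lemma closed_of_nbhd (A : X -> Prop) :
  (forall y, ~ A y -> exists V, [/\ is_open T V, V y & forall z, V z -> ~ A z]) ->
  is_closed T A.
Proof.
move=> nbhd; rewrite /is_closed.
suff -> : (fun x => ~ A x) =
    (fun x => exists V, (is_open T V /\ forall z, V z -> ~ A z) /\ V x).
  by apply: open_union => V [].
apply: set_eq_ext => x; split => [/nbhd [V [oV Vx VA]]|[V [[_ VA] /VA]]] //.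
by exists V.
Qed.

Lemma closed0 : is_closed T (fun _ => False).
Proof.
apply: closed_of_nbhd => y _; exists (fun _ => True).
by split => [|//|z _ []]; exact: open_setT.
Qed.

Lemma closedU (A B : X -> Prop) :
  is_closed T A -> is_closed T B -> is_closed T (fun x => A x \/ B x).
Proof.
move=> clA clB; apply: closed_of_nbhd => y nABy.
exists (fun z => ~ A z /\ ~ B z); split; first exact: open_inter.
- by split => ?; apply: nABy; [left|right].
- by move=> z [nA nB] [].
Qed.

Lemma closed_bigcap (Ch : (X -> Prop) -> Prop) :
  (forall C, Ch C -> is_closed T C) -> is_closed T (fun x => forall C, Ch C -> C x).
Proof.
move=> clCh; apply: closed_of_nbhd => y /existsNP [C /not_implyP [ChC nCy]].
by exists (fun z => ~ C z); split => [||z nCz /(_ C ChC)]; [exact: clCh|..].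
Qed.

Lemma closedI (A B : X -> Prop) :
  is_closed T A -> is_closed T B -> is_closed T (fun x => A x /\ B x).
Proof.
move=> clA clB.
suff -> : (fun x => A x /\ B x) = (fun x => forall C, C = A \/ C = B -> C x).
  by apply: closed_bigcap => C [->|->].
apply: set_eq_ext => x; split => [[Ax Bx] C [->|->] //|AB].
by split; apply: AB; [left|right].
Qed.

Lemma closed_seq_union (I : eqType) (s : seq I) (G : I -> X -> Prop) :
  (forall i, i \in s -> is_closed T (G i)) ->
  is_closed T (fun x => exists2 i, i \in s & G i x).
Proof.
elim: s => [|i s IHs] clG.
  have -> : (fun x => exists2 i, i \in [::] & G i x) = (fun _ => False)
    by apply: set_eq_ext => x; split => [[]|].
  exact: closed0.
have -> : (fun x => exists2 j, j \in i :: s & G j x) =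
    (fun x => G i x \/ exists2 j, j \in s & G j x).
  apply: set_eq_ext => x; split => [[j]|[Gix|[j js Gjx]]].
  - by rewrite in_cons => /orP [/eqP ->|js] Gjx; [left|right; exists j].
  - by exists i; rewrite ?mem_head.
  - by exists j; rewrite // in_cons js orbT.
apply: closedU; first by apply: clG; rewrite mem_head.
by apply: IHs => j js; apply: clG; rewrite in_cons js orbT.
Qed.

Lemma closed_range_union (t : nat) (G : nat -> X -> Prop) :
  (forall i, i < t -> is_closed T (G i)) ->
  is_closed T (fun x => exists i, i < t /\ G i x).
Proof.
move=> clG; have := @closed_seq_union _ (iota 0 t) G.
have -> : (fun x => exists i, i < t /\ G i x) =
    (fun x => exists2 i, i \in iota 0 t & G i x).
  apply: set_eq_ext => x; split => [[i [it Gix]]|[i]].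
  - by exists i; rewrite ?mem_iota.
  - by rewrite mem_iota => /= it; exists i.
by apply => i; rewrite mem_iota; apply: clG.
Qed.

Lemma partition_clopen (t : nat) (G : nat -> X -> Prop) :
  (forall i, i < t -> is_closed T (G i)) ->
  (forall x, exists i, i < t /\ G i x) ->
  (forall i j x, i < t -> j < t -> i <> j -> ~ (G i x /\ G j x)) ->
  forall i, i < t -> is_clopen T (G i).
Proof.
move=> clG cover disj i it; split; last exact: clG.
pose others j := if j == i then fun _ => False else G j.
have -> : G i = (fun x => ~ exists j, j < t /\ others j x).
  apply: set_eq_ext => x; split => [Gix [j [jt]]|nOx]; rewrite /others.
    by case: eqP => // ji Gjx; apply: (disj i j x) => //; move/esym.
  have [j [jt Gjx]] := cover x; case: (eqVneq j i) => [<- //|ji].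
  by case: nOx; exists j; rewrite /others (negbTE ji).
apply: closed_range_union => j jt; rewrite /others.
by case: eqP => _; [exact: closed0|exact: clG].
Qed.

Lemma open_nbhd_seq (J : Type) (P : J -> (X -> Prop) -> Prop) (y : X) (s : list J) :
  (forall j V W, P j V -> subset W V -> P j W) ->
  (forall j, List.In j s -> exists V, [/\ is_open T V, V y & P j V]) ->
  exists V, [/\ is_open T V, V y & forall j, List.In j s -> P j V].
Proof.
move=> Pshrink; elim: s => [|j s IHs] nbhd.
  by exists (fun _ => True); split => //; exact: open_setT.
have [V [oV Vy PV]] := IHs (fun k ks => nbhd k (or_intror ks)).
have [W [oW Wy PW]] := nbhd j (or_introl erefl).
exists (fun z => W z /\ V z); split; [exact: open_inter|by []|].
move=> k [<-|ks]; first by apply: Pshrink PW _ => z [].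
by apply: Pshrink (PV k ks) _ => z [].
Qed.

Hypothesis X_compact : compact_space T.

Lemma compact_finite_meet (Ch : (X -> Prop) -> Prop) :
  (forall C, Ch C -> is_closed T C) ->
  (forall s, (forall C, List.In C s -> Ch C) ->
     exists x, forall C, List.In C s -> C x) ->
  exists x, forall C, Ch C -> C x.
Proof.
move=> clCh finite_meet; apply: contrapT => no_meet.
have notK_set (A : X -> Prop) : (fun x => ~ ~ A x) = A.
  by apply: funext => x; rewrite not_notE.
pose Fam U := Ch (fun x => ~ U x).
have Fam_open U : Fam U -> is_open T U by move/clCh; rewrite /is_closed notK_set.
have Fam_cover x : exists U, Fam U /\ U x.
  apply: contrapT => nx; apply: no_meet; exists x => C ChC.
  by apply: contrapT => nCx; apply: nx; exists (fun y => ~ C y); rewrite /Fam notK_set.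
have [s [sCh cover]] := X_compact Fam_open Fam_cover.
have [x sx] : exists x, forall C, List.In C (map (fun U x => ~ U x) s) -> C x.
  by apply: finite_meet => C /List.in_map_iff [U [<- /sCh]].
have [U [Us Ux]] := cover x.
exact: (sx _ (List.in_map (fun U x => ~ U x) _ _ Us)).
Qed.

Lemma compact_chain_meet (Ch : (X -> Prop) -> Prop) (C0 : X -> Prop) :
  Ch C0 -> (forall C, Ch C -> nonempty C) -> (forall C, Ch C -> is_closed T C) ->
  (forall C D, Ch C -> Ch D -> subset C D \/ subset D C) ->
  exists x, forall C, Ch C -> C x.
Proof.
move=> ChC0 Chne clCh chain; apply: compact_finite_meet => // s sCh.
have [C ChC Cs] : exists2 C, Ch C & forall D, List.In D s -> subset C D.
  elim: s sCh => [|D s IHs] sCh; first by exists C0.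
  have [C ChC Cs] := IHs (fun E Es => sCh E (or_intror Es)).
  have ChD := sCh D (or_introl erefl).
  case: (chain C D ChC ChD) => [CD|DC]; [exists C|exists D] => // E [<-|/Cs] //.
  by move=> CE x /DC /CE.
have [x Cx] := Chne C ChC.
by exists x => D /Cs; apply.
Qed.

Hypothesis X_hausdorff : hausdorff T.

Lemma closed_image (g : X -> X) (A : X -> Prop) :
  continuous T g -> is_closed T A -> is_closed T (fun y => exists x, A x /\ g x = y).
Proof.
move=> g_cont clA; apply: closed_of_nbhd => y ngAy.
pose avoids W V := forall x, A x -> W x -> ~ V (g x).
pose Fam W := is_open T W /\ exists V, [/\ is_open T V, V y & avoids W V].
have Fam_open W : Fam W -> is_open T W by case.
have Fam_cover x : exists W, Fam W /\ W x.
  have [Ax|nAx] := pselect (A x); last first.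
    exists (fun z => ~ A z); split => //; split => //.
    exists (fun _ => True).
    by split; [exact: open_setT|by []|move=> z Az /(_ Az)].
  have [|U [V [oU [oV [Ugx [Vy UV]]]]]] := X_hausdorff (x := g x) (y := y).
    by move=> gxy; apply: ngAy; exists x.
  exists (fun z => U (g z)); split => //; split; first exact: g_cont.
  by exists V; split => // z _ Ugz Vgz; apply: (UV (g z)).
have [s [sFam cover]] := X_compact Fam_open Fam_cover.
have [V [oV Vy sV]] := @open_nbhd_seq _ avoids y s
  (fun W V V' WV V'V x Ax Wx V'gx => WV x Ax Wx (V'V _ V'gx))
  (fun W Ws => proj2 (sFam W Ws)).
exists V; split => // z Vz [x [Ax gxz]]; rewrite -gxz in Vz.
have [W [Ws Wx]] := cover x.
exact: (sV W Ws x Ax Wx Vz).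
Qed.

End Topology.

Section Iterates.
Variables (X Lam : Type) (f : Lam -> X -> X).

Lemma Fimg_mono (A B : X -> Prop) : subset A B -> subset (Fimg f A) (Fimg f B).
Proof. by move=> AB _ [l [x [Ax <-]]]; exists l, x; split => //; apply: AB. Qed.

Lemma Fpow_mono k (A B : X -> Prop) : subset A B -> subset (Fpow f k A) (Fpow f k B).
Proof. by elim: k => [|k IHk] //= AB; apply/Fimg_mono/IHk. Qed.

Lemma FpowD i j (A : X -> Prop) : Fpow f (i + j) A = Fpow f i (Fpow f j A).
Proof. by elim: i => [|i IHi] //=; rewrite IHi. Qed.

Lemma Fpow_mul_fix q k (M : X -> Prop) : Fpow f k M = M -> Fpow f (q * k) M = M.
Proof. by move=> Mk; elim: q => [|q IHq] //; rewrite mulSn FpowD IHq Mk. Qed.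

Definition subinvariant k (C : X -> Prop) := subset (Fpow f k C) C.

Lemma subinvariantM q k (C : X -> Prop) : subinvariant k C -> subinvariant (q * k) C.
Proof.
move=> Ck; elim: q => [|q IHq] //; rewrite /subinvariant mulSn FpowD => x.
by move/(Fpow_mono IHq); apply: Ck.
Qed.

Definition Forbit t (M : X -> Prop) x := exists i, i < t /\ Fpow f i M x.

Lemma Forbit_subinvariant t (M : X -> Prop) :
  Fpow f t M = M -> subinvariant 1 (Forbit t M).
Proof.
move=> Mt _ [l [x [[i [it Mix]] <-]]].
have Mi1 : Fpow f i.+1 M (f l x) by exists l, x.
case: (ltngtP i.+1 t) => [i1t|ti1|i1t]; first by exists i.+1.
  by rewrite ltnS leqNgt it in ti1.
by exists 0; rewrite -i1t /= -Mt -i1t.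
Qed.

Lemma exists_least_period n (M : X -> Prop) :
  0 < n -> Fpow f n M = M ->
  exists t, [/\ 0 < t, Fpow f t M = M & forall s, 0 < s -> Fpow f s M = M -> t <= s].
Proof.
move=> n_gt0 Mn; have hasP : exists s, `[< 0 < s /\ Fpow f s M = M >].
  by exists n; apply/asboolP.
case: (ex_minnP hasP) => t /asboolP [t_gt0 Mt] t_min.
by exists t; split => // s s_gt0 Ms; apply/t_min/asboolP.
Qed.

Section Period.
Variables (M : X -> Prop) (t : nat).
Hypotheses (t_gt0 : 0 < t) (Mt : Fpow f t M = M).
Hypothesis t_min : forall s, 0 < s -> Fpow f s M = M -> t <= s.

Lemma period_dvd n : Fpow f n M = M -> t %| n.
Proof.
move=> Mn; have Mr : Fpow f (n %% t) M = M.
  by rewrite -{2}Mn {2}(divn_eq n t) addnC FpowD Fpow_mul_fix.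
rewrite /dvdn; case: (posnP (n %% t)) => [//|r_gt0].
by have := t_min r_gt0 Mr; rewrite leqNgt ltn_pmod.
Qed.

Lemma period_inj i j : i < t -> j < t -> Fpow f i M = Fpow f j M -> i = j.
Proof.
have lt_neq k l : k < l < t -> Fpow f k M <> Fpow f l M.
  case/andP=> kl lt Mkl.
  have : t <= t - l + k.
    apply: t_min; first by lia.
    by rewrite FpowD Mkl -FpowD subnK ?Mt // ltnW.
  by rewrite leqNgt; lia.
move=> it jt Mij; case: (ltngtP i j) => [ij|ji|//].
- by case: (lt_neq i j); rewrite ?ij.
- by case: (lt_neq j i); rewrite ?ji.
Qed.

End Period.
End Iterates.

Section MinimalSets.
Variables (X : Type) (T : topology X) (Lam : finType) (f : Lam -> X -> X).
Hypotheses (Lam_gt0 : 0 < #|Lam|) (f_cont : forall l, continuous T (f l)).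
Hypotheses (X_compact : compact_space T) (X_hausdorff : hausdorff T).

Lemma Fpow_nonempty k (A : X -> Prop) : nonempty A -> nonempty (Fpow f k A).
Proof.
case/card_gt0P: Lam_gt0 => l _; elim: k => [|k IHk] //= /IHk [x Ax].
by exists (f l x), l, x.
Qed.

Lemma closed_Fimg (A : X -> Prop) : is_closed T A -> is_closed T (Fimg f A).
Proof.
move=> clA.
have -> : Fimg f A = (fun y => exists2 l, l \in enum Lam & exists x, A x /\ f l x = y).
  apply: set_eq_ext => y; split => [[l [x Axy]]|[l _ [x Axy]]]; last by exists l, x.
  by exists l; rewrite ?mem_enum //; exists x.
by apply: closed_seq_union => l _; apply: closed_image.
Qed.

Lemma Fpow_closed k (A : X -> Prop) : is_closed T A -> is_closed T (Fpow f k A).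
Proof. by elim: k => [|k IHk] //= /IHk; apply: closed_Fimg. Qed.

Definition closed_subinvariant k (C : X -> Prop) :=
  [/\ nonempty C, is_closed T C & subinvariant f k C].

Definition minimal_subinvariant k (M : X -> Prop) :=
  closed_subinvariant k M /\
  forall C, closed_subinvariant k C -> subset C M -> subset M C.

Lemma closed_subinvariant_Fpow k j (C : X -> Prop) :
  closed_subinvariant k C -> closed_subinvariant k (Fpow f j C).
Proof.
case=> Cne clC Cinv; split; [exact: Fpow_nonempty|exact: Fpow_closed|].
by rewrite /subinvariant -FpowD addnC FpowD; apply: Fpow_mono.
Qed.

Lemma minimal_subinvariant_fix k (M : X -> Prop) :
  minimal_subinvariant k M -> Fpow f k M = M.
Proof.
case=> Minv Mmin; apply: set_eq_ext => x; split; first by case: Minv => _ _; apply.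
by apply: Mmin; [exact: closed_subinvariant_Fpow|case: Minv].
Qed.

Lemma closed_subinvariant_chain_meet k (Ch : (X -> Prop) -> Prop) (C0 : X -> Prop) :
  Ch C0 -> (forall C, Ch C -> closed_subinvariant k C) ->
  (forall C D, Ch C -> Ch D -> subset C D \/ subset D C) ->
  closed_subinvariant k (fun x => forall C, Ch C -> C x).
Proof.
move=> ChC0 ChCinv chain; split.
- by apply: (compact_chain_meet X_compact ChC0) => // C /ChCinv [].
- by apply: closed_bigcap => C /ChCinv [].
- move=> x Chx C ChC; have [_ _ Cinv] := ChCinv C ChC.
  by apply: Cinv; apply: Fpow_mono Chx => y; apply.
Qed.

Lemma exists_minimal_subinvariant k (A : X -> Prop) :
  closed_subinvariant k A -> exists2 M, subset M A & minimal_subinvariant k M.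
Proof.
(* Zorn_bigcup produces maximal sets; we apply it to the U whose trace A \ U
   is closed subinvariant, the empty U having trace A. *)
move=> Ainv; pose trace (U : X -> Prop) x := A x /\ ~ U x.
have trace0 : trace (fun _ => False) = A.
  by apply: set_eq_ext => x; split => [[Ax _] //|Ax]; split => // [].
have [U [Uinv Umax]] : exists U, closed_subinvariant k (trace U) /\
    forall B, classical_sets.proper U B -> ~ closed_subinvariant k (trace B).
  apply: classical_sets.Zorn_bigcup => F Finv Fchain.
  pose Ch C := exists2 V, F V \/ V = (fun _ => False) & C = trace V.
  have -> : trace (classical_sets.bigcup F id) = (fun x => forall C, Ch C -> C x).
    apply: set_eq_ext => x; split => [[Ax nFx] C [V FV ->]|Chx].
      split => // Vx; case: FV => [FV|Vnil]; last by rewrite Vnil in Vx.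
      by apply: nFx; exists V.
    split; first by rewrite -trace0; apply: Chx; exists (fun _ => False); [right|].
    by case=> V FV Vx; have [] := Chx (trace V); [exists V; [left|]|].
  apply: (@closed_subinvariant_chain_meet _ _ A).
  - by exists (fun _ => False); [right|].
  - by move=> _ [V [FV|->] ->]; [exact: Finv|rewrite trace0].
  - move=> _ _ [V FV ->] [W FW ->].
    case: FV => [FV|->]; last by right => x [Ax _]; split => // [].
    case: FW => [FW|->]; last by left => x [Ax _]; split => // [].
    by case: (Fchain V W FV FW) => [VW|WV]; [right|left] => x [Ax nUx];
      split => // ?; apply: nUx; [apply: VW|apply: WV].
exists (trace U); first by move=> x [].
split=> // C Cinv CU; pose B x := U x \/ ~ C x.
have traceB : trace B = C.
  apply: set_eq_ext => x; split => [[_ nBx]|Cx].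
    by apply: contrapT => nCx; apply: nBx; right.
  by have [Ax nUx] := CU x Cx; split => // [[|]].
have BU : subset B U.
  apply: contrapT => nBU; apply: (Umax B); last by rewrite traceB.
  by split => // x Ux; left.
by move=> x [_ nUx]; apply: contrapT => nCx; apply/nUx/BU; right.
Qed.

Lemma FminimalP k (M : X -> Prop) : Fminimal T f k M <-> minimal_subinvariant k M.
Proof.
split=> [[Mne [clM [Mfix Mmin]]]|Mmin].
  split=> [|C Cinv CM]; first by split=> // x /Mfix.
  have [B BC Bmin] := exists_minimal_subinvariant Cinv.
  have BM : set_eq B M.
    apply: contrapT => nBM; case: (Bmin) => -[Bne clB _] _.
    apply: (Mmin B Bne clB) => [x /BC /CM //|//|].
    by rewrite (minimal_subinvariant_fix Bmin).
  by move=> x /BM /BC.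
have Mfix := minimal_subinvariant_fix Mmin; case: Mmin => -[Mne clM _] Mmin.
split=> //; split=> //; split; first by rewrite Mfix.
move=> A Ane clA AM nAM /set_eq_ext AA; apply: nAM => x; split; first exact: AM.
by apply: Mmin => //; split => //; rewrite /subinvariant AA.
Qed.

Lemma minimal_subinvariant_meet k (M1 M2 : X -> Prop) :
  minimal_subinvariant k M1 -> minimal_subinvariant k M2 ->
  (exists x, M1 x /\ M2 x) -> M1 = M2.
Proof.
have sub N1 N2 : minimal_subinvariant k N1 -> minimal_subinvariant k N2 ->
    (exists x, N1 x /\ N2 x) -> subset N1 N2.
  move=> [[_ clN1 N1inv] N1min] [[_ clN2 N2inv] _] N12 x N1x.
  have [] // := N1min (fun x => N1 x /\ N2 x) _ (fun _ => @proj1 _ _) x N1x.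
  split=> //; first exact: closedI.
  by move=> y N12y; split; [apply: N1inv|apply: N2inv];
    apply: Fpow_mono N12y => z [].
move=> M1min M2min M12; apply: set_eq_ext => x; split; first exact: sub.
by apply: sub => //; case: M12 => y [M1y M2y]; exists y.
Qed.

Lemma minimal_subinvariant_Fpow n i (M : X -> Prop) :
  0 < n -> minimal_subinvariant n M -> minimal_subinvariant n (Fpow f i M).
Proof.
move=> n_gt0 Mmin; have Mfix := minimal_subinvariant_fix Mmin.
case: (Mmin) => Minv Mmin'; split=> [|C Cinv CMi].
  exact: closed_subinvariant_Fpow.
(* F^j maps F^i(M) back onto M, as i + j = i * n and F^n fixes M. *)
pose j := i * n - i; have ij : i + j = i * n by rewrite subnKC // leq_pmulr.
have MC : subset M (Fpow f j C).
  apply: Mmin'; first exact: closed_subinvariant_Fpow.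
  rewrite -(Fpow_mul_fix i Mfix) -ij addnC FpowD.
  exact: Fpow_mono.
case: Cinv => _ _ Cinv x /(Fpow_mono MC).
by rewrite -FpowD ij; apply: subinvariantM.
Qed.

Lemma minimal_subinvariant_dvd k n (M : X -> Prop) :
  k %| n -> subinvariant f k M -> minimal_subinvariant n M ->
  minimal_subinvariant k M.
Proof.
move=> kn Minv [[Mne clM _] Mmin]; split=> // C [Cne clC Cinv].
apply: Mmin; split=> //.
by rewrite -(divnK kn); apply: subinvariantM.
Qed.

Lemma Fminimal_cover k t (G : nat -> X -> Prop) :
  (forall i, i < t -> minimal_subinvariant k (G i)) ->
  (forall x, exists i, i < t /\ G i x) ->
  forall A, Fminimal T f k A <-> exists i, i < t /\ set_eq A (G i).
Proof.
move=> Gmin cover A; rewrite FminimalP; split=> [Amin|[i [it /set_eq_ext ->]]].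
  have [[[x Ax] _ _] _] := Amin; have [i [it Gix]] := cover x.
  exists i; split=> //.
  by rewrite (minimal_subinvariant_meet Amin (Gmin i it)) //; exists x.
exact: Gmin.
Qed.

End MinimalSets.

Theorem lemma3p2 (X : Type) (T : topology X) (Lam : finType) (HLam : 0 < #|Lam|)
  (f : Lam -> X -> X) (Hcont : forall l, continuous T (f l))
  (Hcpt : compact_space T) (Hhaus : hausdorff T)
  (Hmin : minimal_IFS T f) (n : nat) (Hn : 0 < n) :
  exists (M : X -> Prop) (t : nat),
    Fminimal T f n M /\ 1 <= t <= n /\
    (* (1) X is the disjoint union of M, F(M), ..., F^(t-1)(M) *)
    (forall x, exists i, i < t /\ Fpow f i M x) /\
    (forall i j x, i < t -> j < t -> i <> j -> ~ (Fpow f i M x /\ Fpow f j M x)) /\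
    (* (2) each F^i(M), i < t, is clopen *)
    (forall i, i < t -> is_clopen T (Fpow f i M)) /\
    (* (3) these are exactly the F^t-minimal sets, and exactly the F^n-minimal sets *)
    (forall A, Fminimal T f t A <-> exists i, i < t /\ set_eq A (Fpow f i M)) /\
    (forall A, Fminimal T f n A <-> exists i, i < t /\ set_eq A (Fpow f i M)).
Proof.
have FminP := FminimalP HLam Hcont Hcpt Hhaus.
have [[Xne clX _] Xmin] : minimal_subinvariant T f 1 setT by apply/FminP/Hmin.
have [M _ Mmin] : exists2 M, subset M setT & minimal_subinvariant T f n M.
  by apply: exists_minimal_subinvariant => //; split.
have Mfix := minimal_subinvariant_fix HLam Hcont Hcpt Hhaus Mmin.
have [t [t_gt0 Mt t_min]] := exists_least_period Hn Mfix.
have t_dvd : t %| n := period_dvd t_gt0 Mt t_min Mfix.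
have orbit_n i : minimal_subinvariant T f n (Fpow f i M).
  exact: minimal_subinvariant_Fpow.
have orbit_t i : minimal_subinvariant T f t (Fpow f i M).
  apply: minimal_subinvariant_dvd t_dvd _ (orbit_n i).
  by rewrite /subinvariant -FpowD addnC FpowD Mt.
have cover x : Forbit f t M x.
  apply: (Xmin (Forbit f t M)) => //; split; last exact: Forbit_subinvariant.
    by have [[[y My] _ _] _] := Mmin; exists y, 0.
  by apply: closed_range_union => i _; apply: Fpow_closed => //; case: Mmin => -[].
have disj i j x : i < t -> j < t -> i <> j -> ~ (Fpow f i M x /\ Fpow f j M x).
  move=> it jt ij Mijx; apply/ij/(period_inj t_gt0 Mt t_min it jt).
  exact: minimal_subinvariant_meet (orbit_n i) (orbit_n j) (ex_intro _ x Mijx).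
exists M, t; split; first exact/FminP.
split; first by rewrite t_gt0 dvdn_leq.
do 3 split=> //.
  by apply: partition_clopen => // i _; apply: Fpow_closed => //; case: Mmin => -[].
split; apply: Fminimal_cover => // i _; by [exact: orbit_t|exact: orbit_n].
Qed.
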